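(* Let $V\subseteq\mathbb{A}^n$ be an affine variety defined over $\mathbb{Z}$. Then, with the emerging metric on finite prime fields described in the context, $\mathsf{lm}^{\mathrm{loc}}V(\mathrm{F}_q)=\overline{V(\mathbb{Q})}\subseteq V(\mathbb{R})$: the local ultraproduct of the sets $V(\mathrm{F}_q)$, i.e. the image of $V(\mathrm{F})\cap(\mathrm{F}_{/\mathfrak{l}})^n$ under the coordinatewise quotient map $(\mathrm{F}_{/\mathfrak{l}})^n\to(\mathrm{F}_{/\mathfrak{l}}/\!\approx)^n\cong\mathbb{R}^n$, equals the closure in $\mathbb{R}^n$ of the set of rational points $V(\mathbb{Q})$.
   Context: $V$ is the zero set of finitely many polynomials in $\mathbb{Z}[x_1,\dots,x_n]$, and $V(R)$ denotes its set of points with coordinates in a ring $R$. Let $\mathcal{D}$ be a non-principal ultrafilter on $\mathbb{N}$ containing the set of primes, ${}^*\mathbb{Z}=\mathbb{Z}^{\mathbb{N}}/\mathcal{D}$, $\mathfrak{q}\in{}^*\mathbb{Z}$ the class of $(q)_{q\in\mathbb{N}}$, and $\mathrm{F}={}^*\mathbb{Z}/\mathfrak{q}\,{}^*\mathbb{Z}\cong\prod_{\mathcal{D}}\mathrm{F}_q$ with $\mathrm{F}_q=\mathbb{Z}/q\mathbb{Z}$. Assume there is a model ${}^f\mathbb{Z}$ of arithmetic with $\mathbb{Z}\prec{}^f\mathbb{Z}\prec{}^*\mathbb{Z}$ and $\mathfrak{q}>k$ for all $k\in{}^f\mathbb{Z}$, and let $\mathfrak{l}\in{}^f\mathbb{Z}$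 be a positive infinite integer (so $\mathfrak{l}^n<\mathfrak{q}$ for all $n\in\mathbb{N}$). For $m\in\mathbb{N}$ let $Z(m)=\{k\in{}^*\mathbb{Z}:|k|<\mathfrak{l}^m\}$ (embedded in $\mathrm{F}$ by reduction mod $\mathfrak{q}$), $S_m(\mathrm{F})=\{z\in\mathrm{F}:\exists k_1,k_2\in Z(m),k_2\ne0,\ z=k_1k_2^{-1},\ |k_1|/|k_2|\le m\}$, $\mathrm{F}_{/\mathfrak{l}}=\bigcup_mS_m(\mathrm{F})$, $\|z\|=\mathrm{st}(|k_1|/|k_2|)$ for the minimal such pair $(k_1,k_2)$, $\mathsf{d}(z_1,z_2)=\|z_1-z_2\|$, and $z_1\approx z_2$ iff $\mathsf{d}(z_1,z_2)\le 1/n$ for all $n\in\mathbb{N}$. The quotient $\mathrm{F}_{/\mathfrak{l}}/\!\approx$, with induced operations and metric, is identified with $\mathbb{R}$ (the local ultraproduct $\mathsf{lm}^{\mathrm{loc}}\mathrm{F}_q=\mathbb{R}$), and $n$-tuples are treated coordinatewise. *)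

From HB Require Import structures.
From mathcomp Require Import all_boot all_order all_algebra.
From mathcomp Require Import all_classical all_reals all_analysis.
From mathcomp Require mpoly.
From Stdlib Require Lists.List.
Set Implicit Arguments. Unset Strict Implicit. Unset Printing Implicit Defensive.
Import Order.TTheory GRing.Theory Num.Theory.
Local Open Scope ring_scope.

Definition nonprincipal_ultrafilter (D : (nat -> Prop) -> Prop) : Prop :=
  [/\ D (fun _ => True), ~ D (fun _ => False),
      ((forall A B : nat -> Prop, D A -> (forall q, A q -> B q) -> D B) /\
      (forall A B : nat -> Prop, D A -> D B -> D (fun q => A q /\ B q))),
      (forall A : nat -> Prop, D A \/ D (fun q => ~ A q))
    & (forall k : nat, ~ D (fun q => q = k))].

(* Elements of *Z are represented by sequences nat -> int; *Z-relations hold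
   iff they hold on a D-large set of indices. The element q (frak q) is the
   class of (q)_q. Elements of F = *Z / q *Z are represented by sequences
   too, equality in F being D-almost-everywhere congruence modulo q. *)
Definition hyp := nat -> int.

Definition F_eq (D : (nat -> Prop) -> Prop) (a b : hyp) : Prop :=
  D (fun q => (q%:Z %| a q - b q)%Z).

Definition good_l (D : (nat -> Prop) -> Prop) (l : hyp) : Prop :=
  (forall k : nat, D (fun q => k%:Z < l q)) /\
  (forall n : nat, D (fun q => l q ^+ n < q%:Z)).

Definition inZm (D : (nat -> Prop) -> Prop) (l : hyp) (m : nat) (k : hyp) :=
  D (fun q => `|k q| < l q ^+ m).

Definition frac_rep (D : (nat -> Prop) -> Prop) (l : hyp) (m : nat)
    (z k1 k2 : hyp) : Prop :=
  [/\ inZm D l m k1, inZm D l m k2, D (fun q => k2 q != 0)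
    & F_eq D (fun q => z q * k2 q) k1].

Definition in_Sm (D : (nat -> Prop) -> Prop) (l : hyp) (m : nat) (z : hyp) :=
  exists k1 k2, frac_rep D l m z k1 k2 /\
    D (fun q => `|k1 q| <= m%:Z * `|k2 q|).

Definition in_Fl (D : (nat -> Prop) -> Prop) (l : hyp) (z : hyp) :=
  exists m, in_Sm D l m z.

(* The identification F_{/l}/~ = R : z = k1 k2^{-1} goes to the standard
   part r of the hyperrational k1/k2, i.e. |k1/k2 - r| <= 1/(n+1) for all n. *)
Definition st_of (R : realType) (D : (nat -> Prop) -> Prop) (l : hyp)
    (z : hyp) (r : R) : Prop :=
  exists m k1 k2, frac_rep D l m z k1 k2 /\
    forall n : nat, D (fun q =>
      `|(k1 q)%:~R - r * (k2 q)%:~R| <= `|(k2 q)%:~R| / (n.+1)%:R).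

Definition in_VF (D : (nat -> Prop) -> Prop) (n : nat)
    (Ps : seq (mpoly.mpoly n int)) (z : 'I_n -> hyp) : Prop :=
  forall P, Stdlib.Lists.List.In P Ps -> F_eq D (fun q => mpoly.meval (fun i => z i q) P) (fun _ => 0).

Definition loc_ultraproduct (R : realType) (D : (nat -> Prop) -> Prop)
    (l : hyp) (n : nat) (Ps : seq (mpoly.mpoly n int)) : set 'rV[R]_n :=
  [set x | exists z : 'I_n -> hyp,
     [/\ in_VF D Ps z, (forall i, in_Fl D l (z i)) & (forall i, st_of D l (z i) (x 0 i))]].

Definition rational_points (R : realType) (n : nat)
    (Ps : seq (mpoly.mpoly n int)) : set 'rV[R]_n :=
  [set x | exists y : 'I_n -> rat,
     (forall P, Stdlib.Lists.List.In P Ps -> mpoly.mmap (fun c : int => c%:~R) y P = 0) /\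
     x = \row_i ratr (y i)].

Definition real_points (R : realType) (n : nat)
    (Ps : seq (mpoly.mpoly n int)) : set 'rV[R]_n :=
  [set x | forall P, Stdlib.Lists.List.In P Ps -> mpoly.mmap (fun c : int => c%:~R) (fun i => x 0 i) P = 0].

From mathcomp Require Import all_boot all_order all_algebra.
From mathcomp Require Import mpoly.
From mathcomp Require Import all_classical all_reals all_analysis.
From mathcomp Require Import zify.
Import numFieldTopology.Exports.
Import Order.TTheory GRing.Theory Num.Theory.
Local Open Scope ring_scope.

(* A point of the local ultraproduct is given, D-almost everywhere in q, by
   fractions k1/k2 with |k1|, |k2| < l^m approximating x.  Homogenizing a
   defining polynomial P clears the denominators: the integer P^h(k1, k2)
   vanishes mod q and is bounded by |P|_1 l^(m deg(P) n) < q, so it is 0 and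
   k1/k2 is a rational point of V close to x.  Conversely, for rational points
   w_j of V with w_j -> x, take at index q the last w_j whose height is below
   l_q: its reduction mod q lies on V (the same identity read backwards), and
   as l is infinite the chosen j tends to infinity along D.  Finally V(Q) lies
   in V(R), which is closed since polynomials are continuous. *)

Section HomogeneousEvaluation.
Context {n : nat}.
Implicit Types (P : {mpoly int[n]}) (m : 'X_{1..n}).

Definition zeval (S : ringType) (a : 'I_n -> S) P : S :=
  mmap (fun c : int => c%:~R) a P.
Arguments zeval {S}.

(* P homogenized in degree msize P (one more than its total degree) and
   evaluated at the projective point (a : b); for a field, this is
   P (a / b) with its denominators cleared. *)
Definition mhomev (S : comRingType) (a b : 'I_n -> S) P : S :=
  \sum_(m <- msupp P) (P@_m)%:~R *
    \prod_i (a i ^+ m i * b i ^+ (msize P - m i)).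

Arguments mhomev {S}.

Definition mnorm1 P : int := \sum_(m <- msupp P) `|P@_m|.

Lemma mnm_le_msize P m i : m \in msupp P -> (m i <= msize P)%N.
Proof.
move=> mP; apply: leq_trans (ltnW (msize_mdeg_lt mP)).
by rewrite mdegE (bigD1 i) //= leq_addr.
Qed.

Lemma mhomevM (S : comRingType) (a b : 'I_n -> S) P :
  mhomev (fun i => a i * b i) b P = \prod_i b i ^+ msize P * zeval a P.
Proof.
rewrite /zeval /mmap big_distrr /=; apply: eq_big_seq => m mP.
rewrite mulrCA; congr (_ * _); rewrite /mmap1 -big_split /=.
apply: eq_bigr => i _.
by rewrite exprMn -mulrA -exprD subnKC ?mnm_le_msize // mulrC.
Qed.

Lemma rmorph_mhomev {S T : comRingType} (f : {rmorphism S -> T}) a b P :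
  f (mhomev a b P) = mhomev (f \o a) (f \o b) P.
Proof.
rewrite rmorph_sum; apply: eq_bigr => m _.
rewrite rmorphM rmorph_int rmorph_prod; congr (_ * _); apply: eq_bigr => i _.
by rewrite rmorphM !rmorphXn.
Qed.

Lemma rmorph_zeval {S T : comRingType} (f : {rmorphism S -> T}) a P :
  f (zeval a P) = zeval (f \o a) P.
Proof.
rewrite rmorph_sum; apply: eq_bigr => m _.
rewrite rmorphM rmorph_int rmorph_prod; congr (_ * _); apply: eq_bigr => i _.
by rewrite rmorphXn.
Qed.

Lemma meval_zeval (v : 'I_n -> int) P : meval v P = zeval v P.
Proof. by apply: eq_bigr => m _; rewrite intz. Qed.

Lemma mhomev_eq0 (K : fieldType) (a b : 'I_n -> K) P : (forall i, b i != 0) ->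
  (mhomev a b P == 0) = (zeval (fun i => a i / b i) P == 0).
Proof.
move=> b0; rewrite {1}(_ : a = fun i => a i / b i * b i); last first.
  by apply: boolp.funext => i; rewrite divfK.
have bM0 : \prod_i b i ^+ msize P != 0.
  by apply/prodf_neq0 => i _; rewrite expf_neq0.
by rewrite mhomevM mulf_eq0 (negPf bM0).
Qed.

Lemma norm_mhomev_le (a b : 'I_n -> int) (L : int) P :
  (forall i, `|a i| <= L) -> (forall i, `|b i| <= L) ->
  `|mhomev a b P| <= mnorm1 P * L ^+ (msize P * n).
Proof.
move=> aL bL; apply: le_trans (ler_norm_sum _ _ _) _.
rewrite /mnorm1 big_distrl /= !big_seq; apply: ler_sum => m mP.
rewrite normrM intz ler_wpM2l // normr_prod exprM.
have -> : L ^+ msize P ^+ n = \prod_(i < n) L ^+ msize P.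
  by rewrite prodr_const card_ord.
apply: ler_prod => i _; rewrite normr_ge0 /= normrM !normrX.
have L0 : 0 <= L := le_trans (normr_ge0 _) (aL i).
rewrite -{2}(subnKC (mnm_le_msize _ _ i mP)) exprD.
by apply: ler_pM; rewrite ?exprn_ge0 // lerXn2r ?nnegrE.
Qed.

Lemma norm_mhomev_lt (a b : 'I_n -> int) (L q : int) (M : nat) P :
  (forall i, `|a i| <= L ^+ M) -> (forall i, `|b i| <= L ^+ M) ->
  mnorm1 P < L -> L ^+ (M * (msize P * n)).+1 <= q ->
  `|mhomev a b P| < q.
Proof.
move=> aL bL PL Lq; apply: le_lt_trans (norm_mhomev_le _ _ _ P aL bL) _.
apply: lt_le_trans Lq; rewrite -exprM exprS ltr_pM2r ?exprn_gt0 //.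
by apply: le_lt_trans PL; apply: sumr_ge0.
Qed.

Lemma zeval_continuous (R : realType) P :
  continuous (fun x : 'rV[R]_n => zeval (fun i => x 0 i) P).
Proof.
apply: continuous_big => [|m _]; first exact: add_continuous.
move=> x; apply: continuousM; first exact: cst_continuous.
apply: continuous_big => [|i _]; first exact: mul_continuous.
move=> y; exact: continuous_comp (@coord_continuous R 1 n 0 i y)
  (@exprn_continuous R (m i) _).
Qed.

End HomogeneousEvaluation.
Arguments zeval {n S}.
Arguments mhomev {n S}.

Lemma ultrafilter_proper {D : set_system nat} :
  nonprincipal_ultrafilter D -> ProperFilter D.
Proof. by case=> DT DF [DS DI] _ _; split=> //; split=> // A B /DS; apply. Qed.

Lemma filter_forall_In (X T : Type) (F : set_system X) (s : seq T)
    (A : T -> set X) : Filter F ->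
  (forall t, List.In t s -> F (A t)) -> F (fun x => forall t, List.In t s -> A t x).
Proof.
move=> FF; elim: s => [|t s IHs] FA; first exact: filterE.
apply: filterS2 (FA t (or_introl erefl)) (IHs (fun u su => FA u (or_intror su))).
by move=> x Atx Asx u [<-|]; [exact: Atx | exact: Asx].
Qed.

Lemma dvdz_Fp (q : nat) (k : int) : prime q -> (q%:Z %| k)%Z = (k%:~R == 0 :> 'F_q).
Proof. by move=> /pchar_Fp /dvdz_pcharf ->. Qed.

Lemma dvdz_small (q : nat) (k : int) : (q%:Z %| k)%Z -> `|k| < q%:Z -> k = 0.
Proof.
rewrite dvdzE /= => qk kq; apply/eqP; apply: contraLR kq => k0.
have := dvdn_leq _ qk; rewrite absz_gt0 => /(_ k0).
rewrite -leNgt -abszE; lia.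
Qed.

Lemma ltn_absz (k : nat) (L : int) : k%:Z < L -> (k < `|L|)%N.
Proof. by case: L => // m; rewrite ltz_nat. Qed.

Lemma denq_not_dvdz (q : nat) (w : rat) : `|denq w| < q%:Z -> ~~ (q%:Z %| denq w)%Z.
Proof. by move=> wq; apply/negP => /dvdz_small /(_ wq) /eqP; rewrite (negPf (denq_neq0 _)). Qed.

(* The representative in [0, q) of w mod q; junk when q divides denq w. *)
Definition lift_ratFp (q : nat) (w : rat) : int :=
  Posz (val ((numq w)%:~R / (denq w)%:~R : 'F_q)).

Lemma lift_ratFpE (q : nat) (w : rat) :
  (lift_ratFp q w)%:~R = (numq w)%:~R / (denq w)%:~R :> 'F_q.
Proof. exact: natr_Zp. Qed.

Lemma dvdz_lift_ratFp (q : nat) (w : rat) : prime q -> ~~ (q%:Z %| denq w)%Z ->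
  (q%:Z %| lift_ratFp q w * denq w - numq w)%Z.
Proof.
move=> qp; rewrite !dvdz_Fp // => den0.
by rewrite rmorphB rmorphM /= lift_ratFpE divfK ?subrr.
Qed.

Section ReductionModp.
Context {n q : nat} (q_prime : prime q).
Implicit Types (P : {mpoly int[n]}).

Lemma zeval_frac_eq0 P (z k1 k2 : 'I_n -> int) :
  (q%:Z %| meval z P)%Z -> (forall i, (q%:Z %| z i * k2 i - k1 i)%Z) ->
  (forall i, k2 i != 0) -> `|mhomev k1 k2 P| < q%:Z ->
  zeval (fun i => (k1 i)%:~R / (k2 i)%:~R : rat) P = 0.
Proof.
move=> zP zk k20 small.
have hom0 : mhomev k1 k2 P = 0.
  apply: dvdz_small small.
  rewrite dvdz_Fp // (rmorph_mhomev (intr : {rmorphism int -> 'F_q})).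
  have -> : (intr : int -> 'F_q) \o k1 = fun i => (z i)%:~R * (k2 i)%:~R.
    apply: boolp.funext => i /=.
    by have := zk i; rewrite dvdz_Fp // rmorphB rmorphM subr_eq0 => /eqP <-.
  move: zP; rewrite dvdz_Fp // meval_zeval rmorph_zeval => /eqP zP.
  by rewrite mhomevM zP mulr0.
apply/eqP; rewrite -mhomev_eq0 => [|i]; last by rewrite intr_eq0.
by rewrite -(rmorph_mhomev (intr : {rmorphism int -> rat})) hom0 rmorph0.
Qed.

Lemma dvdz_meval_lift_ratFp P (w : 'I_n -> rat) :
  (forall i, ~~ (q%:Z %| denq (w i))%Z) -> zeval w P = 0 ->
  (q%:Z %| meval (fun i => lift_ratFp q (w i)) P)%Z.
Proof.
move=> qden wP.
have hom0 : mhomev (fun i => numq (w i)) (fun i => denq (w i)) P = 0.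
  apply/eqP; rewrite -(intr_eq0 rat) (rmorph_mhomev (intr : {rmorphism int -> rat})).
  rewrite mhomev_eq0 => [|i]; last by rewrite intr_eq0 denq_neq0.
  by under eq_fun do rewrite divq_num_den; rewrite wP.
rewrite dvdz_Fp // meval_zeval (rmorph_zeval (intr : {rmorphism int -> 'F_q})).
have -> : (intr : int -> 'F_q) \o (fun i => lift_ratFp q (w i)) =
    fun i => (numq (w i))%:~R / (denq (w i))%:~R.
  by apply: boolp.funext => i; exact: lift_ratFpE.
rewrite -mhomev_eq0 => [|i]; last by rewrite -dvdz_Fp.
by rewrite -(rmorph_mhomev (intr : {rmorphism int -> 'F_q})) hom0 rmorph0.
Qed.

End ReductionModp.

Lemma ler_norm_sub_frac (R : numFieldType) (x a b c : R) : b != 0 ->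
  (`|a - x * b| <= `|b| * c) = (`|x - a / b| <= c).
Proof.
by move=> b0; rewrite -{1}(divfK b0 a) -mulrBl normrM mulrC distrC ler_pM2l ?normr_gt0.
Qed.

Lemma ratr_num_den (R : numFieldType) (w : rat) :
  ratr w = (numq w)%:~R / (denq w)%:~R :> R.
Proof. by rewrite -{1}[w]divq_num_den fmorph_div /= !ratr_int. Qed.

Lemma norm_numq_le (R : realType) (x : R) (w : rat) : `|x - ratr w| <= 1 ->
  `|numq w| <= (Num.Def.trunc `|x|).+2%:Z * `|denq w|.
Proof.
move=> xw; rewrite -(ler_int R) intrM /= !intr_norm.
rewrite -ler_pdivrMr ?normr_gt0 ?intr_eq0 ?denq_neq0 // -normf_div -ratr_num_den.
change (`|ratr w| <= (Num.Def.trunc `|x|).+2%:R :> R).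
have -> : ratr w = x + (ratr w - x) :> R by rewrite addrC subrK.
rewrite -natr1; apply: le_trans (ler_normD _ _) _.
by apply: lerD; [exact: ltW (truncnS_gt _) | rewrite distrC].
Qed.

Definition last_below (h : nat -> nat) (L : nat) : nat := (\max_(j < L.+1 | h j < L) j)%N.

Lemma last_below_lt {h : nat -> nat} {L : nat} : (h 0 < L)%N -> (h (last_below h L) < L)%N.
Proof.
move=> h0; have nonempty : (0 < #|[pred j : 'I_L.+1 | h j < L]|)%N.
  by apply/card_gt0P; exists ord0.
have [j hj e] := eq_bigmax_cond (fun j : 'I_L.+1 => val j) nonempty.
by rewrite /last_below (eq_bigl (fun j => j \in [pred j : 'I_L.+1 | h j < L]%N)) // e.
Qed.

Lemma leq_last_below (h : nat -> nat) (L j : nat) :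
  (h j < L)%N -> (j <= L)%N -> (j <= last_below h L)%N.
Proof. by move=> hj jL; apply: (@leq_bigmax_cond _ _ val (Ordinal (jL : j < L.+1)%N)). Qed.

Local Open Scope classical_set_scope.

Lemma closure_rational_points_approx (R : realType) (n : nat) (Ps : seq {mpoly int[n]})
    (x : 'rV[R]_n) :
  closure (@rational_points R n Ps) x -> forall j : nat,
  exists w : 'I_n -> rat, (forall P, List.In P Ps -> zeval w P = 0) /\
    (forall i, `|x 0 i - ratr (w i)| < j.+1%:R^-1).
Proof.
move=> clx j; have j0 : 0 < j.+1%:R^-1 :> R by rewrite invr_gt0 ltr0n.
have [_ [[w [wV ->]] xw]] := clx _ (nbhsx_ballx x _ j0).
by exists w; split => // i; have := xw.2 0 i; rewrite mxE.
Qed.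

Lemma closure_rational_points_sub_real_points (R : realType) (n : nat)
    (Ps : seq {mpoly int[n]}) :
  closure (@rational_points R n Ps) `<=` @real_points R n Ps.
Proof.
move=> x clx P PPs.
pose V0 := (fun y : 'rV[R]_n => zeval (fun i => y 0 i) P) @^-1` [set 0 : R].
have V0_closed : closed V0.
  by apply: preimage_closed; [move=> y _; exact: zeval_continuous | exact: closed_eq].
have sub : @rational_points R n Ps `<=` V0.
  move=> _ [w [wV ->]]; rewrite /V0 /=.
  under eq_fun do rewrite mxE.
  rewrite -(rmorph_zeval (ratr : {rmorphism rat -> R})).
  by rewrite (wV P PPs : zeval w P = 0) rmorph0.
by move: (closureS sub clx); rewrite -(proj1 (closure_id V0) V0_closed).
Qed.

Section LocalUltraproduct.
Variables (R : realType) (D : set_system nat) (l : hyp) (n : nat) (Ps : seq {mpoly int[n]}).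
Hypotheses (D_ultra : nonprincipal_ultrafilter D) (D_prime : D (fun q => prime q))
  (l_good : good_l D l).

Lemma loc_ultraproduct_sub_closure :
  @loc_ultraproduct R D l n Ps `<=` closure (@rational_points R n Ps).
Proof.
have DF := ultrafilter_proper D_ultra; case: l_good => l_inf l_small.
move=> x [z [zV _ zst]].
have /boolp.choice[r rP] : forall i, exists t : nat * hyp * hyp,
    frac_rep D l t.1.1 (z i) t.1.2 t.2 /\
    forall N : nat, D (fun q => `|(t.1.2 q)%:~R - x 0 i * (t.2 q)%:~R|
                                <= `|(t.2 q)%:~R| / N.+1%:R).
  by move=> i; have [m [k1 [k2 ?]]] := zst i; exists (m, k1, k2).
pose M := (\max_i (r i).1.1)%N.
move=> B /nbhs_ballP[e e0 eB].
have [N Ne] : exists N : nat, N.+1%:R^-1 < e.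
  by exists (Num.Def.trunc e^-1); rewrite invf_plt ?posrE // truncnS_gt.
have Dfrac : D (fun q => forall i,
    [/\ `|(r i).1.2 q| < l q ^+ (r i).1.1, `|(r i).2 q| < l q ^+ (r i).1.1,
        (r i).2 q != 0, (q%:Z %| z i q * (r i).2 q - (r i).1.2 q)%Z &
        `|((r i).1.2 q)%:~R - x 0 i * ((r i).2 q)%:~R| <= `|((r i).2 q)%:~R| / N.+1%:R]).
  apply: filter_forall => i; have [[k1_small k2_small k2_0 zk] close] := rP i.
  apply: filterS (filterI k1_small (filterI k2_small (filterI k2_0 (filterI zk (close N))))).
  by move=> q [? [? [? [? ?]]]]; split.
have DPs : D (fun q => forall P, List.In P Ps ->
    [/\ (q%:Z %| meval (fun i => z i q) P)%Z, mnorm1 P < l q &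
        l q ^+ (M * (msize P * n)).+1 < q%:Z]).
  apply: filter_forall_In => P PPs.
  have D_Pl := l_inf `|mnorm1 P|%N; have D_lq := l_small (M * (msize P * n)).+1.
  apply: filterS (filterI (zV P PPs) (filterI D_Pl D_lq)).
  move=> q [qP [Pl lq]]; split => //; first by rewrite subr0 in qP.
  by apply: le_lt_trans Pl; rewrite abszE ler_norm.
have [q [fracq [Psq [qp l0]]]] :=
  filter_ex (filterI Dfrac (filterI DPs (filterI D_prime (l_inf 0%N)))).
have le_lM i k : `|k| < l q ^+ (r i).1.1 -> `|k| <= l q ^+ M.
  move=> /ltW /le_trans; apply; apply: ler_weXn2l; first by lia.
  exact: (@leq_bigmax _ (fun i => (r i).1.1) i).
pose y i : rat := ((r i).1.2 q)%:~R / ((r i).2 q)%:~R.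
exists (\row_i ratr (y i)); split.
  exists y; split => // P PPs; have [qP Pl lq] := Psq P PPs.
  apply: (zeval_frac_eq0 qp P _ _ _ qP) => [i|i|];
    [by case: (fracq i) | by case: (fracq i) |].
  apply: (norm_mhomev_lt _ _ (l q) _ M P) => // [i|i|]; last exact: ltW.
    by case: (fracq i) => + _ _ _ _; apply: le_lM.
  by case: (fracq i) => _ + _ _ _; apply: le_lM.
apply: eB; split => // i j; rewrite ord1 /ball /= mxE fmorph_div /= !ratr_int.
case: (fracq j) => _ _ k0 _; rewrite -(intr_eq0 R) in k0.
by rewrite ler_norm_sub_frac // => /le_lt_trans; apply.
Qed.

Lemma frac_rep_lift_ratFp (w : nat -> rat) (m : nat) : (0 < m)%N ->
  D (fun q => [/\ prime q, `|numq (w q)| < l q, `|denq (w q)| < l q & l q < q%:Z]) ->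
  frac_rep D l m (fun q => lift_ratFp q (w q)) (fun q => numq (w q)) (fun q => denq (w q)).
Proof.
have DF := ultrafilter_proper D_ultra; move=> m0 Dw.
have l_le_lm (k : int) q : `|k| < l q -> l q <= l q ^+ m.
  by move=> kl; apply: ler_eXnr => //; rewrite -gtz0_ge1 (le_lt_trans _ kl).
split.
- apply: filterS Dw => q [_ num_small _ _].
  exact: lt_le_trans num_small (l_le_lm _ _ num_small).
- apply: filterS Dw => q [_ _ den_small _].
  exact: lt_le_trans den_small (l_le_lm _ _ den_small).
- by apply: filterE => q; exact: denq_neq0.
- apply: filterS Dw => q [qp _ den_small lq].
  by apply: dvdz_lift_ratFp qp _; apply: denq_not_dvdz; apply: lt_trans lq.
Qed.

Lemma closure_sub_loc_ultraproduct :
  closure (@rational_points R n Ps) `<=` @loc_ultraproduct R D l n Ps.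
Proof.
have DF := ultrafilter_proper D_ultra; case: l_good => l_inf l_small.
move=> x /closure_rational_points_approx/boolp.choice[W WP].
pose ht j := (\max_i maxn `|numq (W j i)| `|denq (W j i)|)%N.
have ht_ge j i : (`|numq (W j i)| <= ht j)%N /\ (`|denq (W j i)| <= ht j)%N.
  by apply/andP; rewrite -geq_max; exact: (@leq_bigmax _ (fun i => maxn _ _) i).
pose w q := W (last_below ht `|l q|%N).
have Dw i : D (fun q => [/\ prime q, `|numq (w q i)| < l q, `|denq (w q i)| < l q
                          & l q < q%:Z]).
  apply: filterS (filterI D_prime (filterI (l_inf (ht 0)) (filterI (l_inf 0) (l_small 1)))).
  move=> q [qp [/ltn_absz/last_below_lt h0 [l0 lq]]].
  by have [] := ht_ge (last_below ht `|l q|%N) i; rewrite /w; split => //; lia.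
pose M i := (Num.Def.trunc `|x 0 i|).+2.
have FR i := frac_rep_lift_ratFp _ (M i) isT (Dw i).
exists (fun i q => lift_ratFp q (w q i)); split.
- move=> P PPs; have Dw_all := @filter_forall _ _ _ D DF Dw.
  apply: filterS (filterI D_prime Dw_all) => q [qp Dwq]; rewrite subr0.
  apply: (dvdz_meval_lift_ratFp qp P _ _ ((WP _).1 P PPs)) => i.
  by have [_ _ den_small lq] := Dwq i; apply: denq_not_dvdz; apply: lt_trans lq.
- move=> i; exists (M i), (fun q => numq (w q i)), (fun q => denq (w q i)); split => //.
  apply: filterE => q; apply/norm_numq_le/ltW/(lt_le_trans ((WP _).2 i)).
  by rewrite invf_le1 ?ltr0n // ler1n.
- move=> i; exists (M i), (fun q => numq (w q i)), (fun q => denq (w q i)); split => // N.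
  apply: filterS (l_inf (maxn (ht N) N)) => q /ltn_absz; rewrite gtn_max => /andP[htN lN].
  have NJ : (N <= last_below ht `|l q|%N)%N by apply: leq_last_below => //; exact: ltnW.
  rewrite ler_norm_sub_frac ?intr_eq0 ?denq_neq0 // -ratr_num_den.
  apply/ltW/(lt_le_trans ((WP _).2 i)).
  by rewrite lef_pV2 ?posrE ?ltr0n // ler_nat.
Qed.

End LocalUltraproduct.

Theorem proposition3p7 (R : realType) (D : (nat -> Prop) -> Prop) (l : hyp)
    (n : nat) (Ps : seq (mpoly.mpoly n int)) :
  nonprincipal_ultrafilter D -> D (fun q => prime q) -> good_l D l ->
  @loc_ultraproduct R D l n Ps = closure (@rational_points R n Ps) /\
  closure (@rational_points R n Ps) `<=` @real_points R n Ps.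
Proof.
move=> D_ultra D_prime l_good.
split; last exact: closure_rational_points_sub_real_points.
rewrite eqEsubset; split; first exact: loc_ultraproduct_sub_closure.
exact: closure_sub_loc_ultraproduct.
Qed.
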